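(* Let $u:\mathbb{R}^d\to\mathbb{R}$ be $\mathbb{Z}^d$-periodic and such that $D^2u\succeq-\lambda I_d$ in the weak sense, for some $\lambda\ge0$. Then for every $x\in\mathbb{R}^d$ and every $p\in\partial u(x)$, one has $|p|_\infty\le\frac12\lambda$, where $|p|_\infty=\max_i|p_i|$.
   Context: $\partial u(x)$ denotes the subdifferential of the semi-convex function $u$ at $x$ (the set of $p$ with $u(y)\ge u(x)+p\cdot(y-x)-\frac\lambda2|y-x|^2$ for all $y$). *)

From HB Require Import structures.
From mathcomp Require Import all_boot all_order all_algebra.
From mathcomp Require Import reals.
Set Implicit Arguments. Unset Strict Implicit. Unset Printing Implicit Defensive.
Import Order.TTheory GRing.Theory Num.Theory.
Local Open Scope ring_scope.

Definition dotv (R : realType) (d : nat) (p x : 'rV[R]_d) : R :=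
  \sum_(i < d) p 0 i * x 0 i.
Definition sqnorm (R : realType) (d : nat) (x : 'rV[R]_d) : R := dotv x x.

Definition supnorm (R : realType) (d : nat) (p : 'rV[R]_d) : R :=
  \big[Num.max/0]_(i < d) `|p 0 i|.

Definition Zd_periodic (R : realType) (d : nat) (u : 'rV[R]_d -> R) : Prop :=
  forall (x : 'rV[R]_d) (k : 'I_d -> int), u (x + \row_i (k i)%:~R) = u x.

Definition convex_fun (R : realType) (d : nat) (f : 'rV[R]_d -> R) : Prop :=
  forall (x y : 'rV[R]_d) (t : R), 0 <= t -> t <= 1 ->
    f ((1 - t) *: x + t *: y) <= (1 - t) * f x + t * f y.

(* D^2 u >= - lambda I_d (weak sense): u + lambda/2 |x|^2 is convex *)
Definition hessian_ge (R : realType) (d : nat) (u : 'rV[R]_d -> R) (lam : R) : Prop :=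
  convex_fun (fun x => u x + lam / 2 * sqnorm x).

(* subdifferential of a lambda-semiconvex function u at x *)
Definition subdiff (R : realType) (d : nat) (u : 'rV[R]_d -> R) (lam : R)
  (x p : 'rV[R]_d) : Prop :=
  forall y : 'rV[R]_d, u y >= u x + dotv p (y - x) - lam / 2 * sqnorm (y - x).

From HB Require Import structures.
From mathcomp Require Import all_boot all_order all_algebra.
From mathcomp Require Import reals.
Set Implicit Arguments. Unset Strict Implicit. Unset Printing Implicit Defensive.
Import Order.TTheory GRing.Theory Num.Theory.
Local Open Scope ring_scope.

Section Subgradient.
Variables (R : realType) (d : nat).
Implicit Types (u : 'rV[R]_d -> R) (x p v : 'rV[R]_d).

Lemma dotvN p v : dotv p (- v) = - dotv p v.
Proof. by rewrite /dotv -sumrN; apply: eq_bigr => j _; rewrite mxE mulrN. Qed.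

Lemma sqnormN v : sqnorm (- v) = sqnorm v.
Proof. by rewrite /sqnorm /dotv; apply: eq_bigr => j _; rewrite mxE mulrNN. Qed.

Lemma dotv_delta p (i : 'I_d) : dotv p (delta_mx 0 i) = p 0 i.
Proof.
rewrite /dotv (bigD1 i) //= big1 ?addr0 => [|j /negbTE ji].
  by rewrite mxE !eqxx mulr1.
by rewrite mxE ji mulr0.
Qed.

Lemma sqnorm_delta (i : 'I_d) : sqnorm (delta_mx 0 i : 'rV[R]_d) = 1.
Proof. by rewrite /sqnorm dotv_delta mxE !eqxx. Qed.

Lemma Zd_periodic_delta u x (i : 'I_d) (s : int) :
  Zd_periodic u -> u (x + s%:~R *: delta_mx 0 i) = u x.
Proof.
move=> per; have <- := per x (fun j => if j == i then s else 0).
congr (u (x + _)); apply/rowP => j; rewrite !mxE eqxx /=.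
by case: (j == i); rewrite ?mulr1 ?mulr0.
Qed.

Lemma subdiff_dotv_le u lam x p v :
  subdiff u lam x p -> u (x + v) <= u x -> dotv p v <= lam / 2 * sqnorm v.
Proof.
move=> sd le_uxv; have := sd (x + v); rewrite [x + v - x]addrC addKr => ge_uxv.
by have := le_trans ge_uxv le_uxv; rewrite -addrA gerDl subr_le0.
Qed.

Lemma supnorm_le p (c : R) :
  0 <= c -> (forall i, `|p 0 i| <= c) -> supnorm p <= c.
Proof.
move=> c0 le_pc; rewrite /supnorm.
by apply: (big_ind (fun y => y <= c)) => // a b ha hb; rewrite ge_max ha hb.
Qed.

End Subgradient.

Theorem mainTheorem3 (R : realType) (d : nat) (u : 'rV[R]_d -> R) (lam : R) :
  0 <= lam -> Zd_periodic u -> hessian_ge u lam ->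
  forall (x p : 'rV[R]_d), subdiff u lam x p -> supnorm p <= lam / 2.
Proof.
move=> lam0 per _ x p sd.
apply: supnorm_le => [|i]; first by rewrite divr_ge0.
have fixed_shift (s : int) : u (x + s%:~R *: delta_mx 0 i) <= u x.
  by rewrite Zd_periodic_delta.
have := subdiff_dotv_le sd (fixed_shift 1).
have := subdiff_dotv_le sd (fixed_shift (-1)).
rewrite scale1r scaleN1r dotvN sqnormN dotv_delta sqnorm_delta mulr1.
by move=> le_Npi_lam le_pi_lam; rewrite ler_norml le_pi_lam lerNl le_Npi_lam.
Qed.
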